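(* Let $t_1$ and $t_2$ be terms. If the output of the typed unification algorithm applied to $t_1$ and $t_2$ is $\mathit{wrong}$, then there is no substitution $\theta$ such that $\theta(t_1)$ and $\theta(t_2)$ have the same type.
   Context: Terms are built from variables and function symbols: a variable is a term, and if $f$ is an $n$-ary function symbol and $t_1,\dots,t_n$ are terms then $f(t_1,\dots,t_n)$ is a term; a $0$-ary function symbol is a constant. Types: base types int, float, atom, string; compound types $f(\sigma_1,\dots,\sigma_n)$. Every constant has an associated base type, and every function symbol $f$ of arity $n\ge 1$ has type $\sigma_1\times\cdots\times\sigma_n\to f(\sigma_1,\dots,\sigma_n)$, so a ground term $f(t_1,\dots,t_n)$ with $t_i$ of type $\sigma_i$ has type $f(\sigma_1,\dots,\sigma_n)$. A substitution maps variables to terms; $\theta(t)$ denotes its application to $t$. Typed unification algorithm: given terms $t_1,t_2$, start from the pair $(S,F)=(\{t_1=t_2\},\mathit{true})$, where $F$ is a flag, and rewrite it with the following rules until none applies or the algorithm halts with $\mathit{wrong}$ ($c,d$ denote constants, $X$ a variable, $\mathit{Rest}$ the remaining equations): 1. $(\{f(t_1,\dots,t_n)=f(s_1,\dots,s_n)\}\cup \mathit{Rest},F)\to(\{t_1=s_1,\dots,t_n=s_n\}\cup\mathit{Rest},F)$; 2. $(\{f(t_1,\dots,t_n)=g(s_1,\dots,s_m)\}\cup\mathit{Rest},F)\to \mathit{wrong}$ if $f\neq g$ or $n\neq m$; 3. $(\{c=c\}\cup\mathit{Rest},F)\to(\mathit{Rest},F)$; 4. $(\{c=d\}\cup\mathit{Rest},F)\to(\mathit{Rest},\mathit{false})$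 if $c\neq d$ and $c,d$ have the same type; 5. $(\{c=d\}\cup\mathit{Rest},F)\to\mathit{wrong}$ if $c\neq d$ and $c,d$ have different types; 6. $(\{c=f(t_1,\dots,t_n)\}\cup\mathit{Rest},F)\to\mathit{wrong}$; 7. $(\{f(t_1,\dots,t_n)=c\}\cup\mathit{Rest},F)\to\mathit{wrong}$; 8. $(\{X=X\}\cup\mathit{Rest},F)\to(\mathit{Rest},F)$; 9. $(\{t=X\}\cup\mathit{Rest},F)\to(\{X=t\}\cup\mathit{Rest},F)$ if $t$ is not a variable; 10. $(\{X=t\}\cup\mathit{Rest},F)\to(\{X=t\}\cup[X\mapsto t](\mathit{Rest}),F)$ if $X$ does not occur in $t$ and $X$ occurs in $\mathit{Rest}$; 11. $(\{X=t\}\cup\mathit{Rest},F)\to(\mathit{Rest},\mathit{false})$ if $X$ occurs in $t$ and $X\neq t$. When no rule applies, the algorithm outputs $\mathit{false}$ if the flag is $\mathit{false}$, and otherwise outputs the current solved set $S$. *)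

From Stdlib Require Import List Permutation ClassicalEpsilon.
Import ListNotations.

Inductive basety : Type := TInt | TFloat | TAtom | TString.

Inductive ty (Fn : Type) : Type :=
| Base : basety -> ty Fn
| Comp : Fn -> list (ty Fn) -> ty Fn.
Arguments Base {Fn} _.
Arguments Comp {Fn} _ _.

(* Terms over variables V and function symbols Fn.
   A constant is a 0-ary application  App c [].  *)
Inductive term (V Fn : Type) : Type :=
| Var : V -> term V Fn
| App : Fn -> list (term V Fn) -> term V Fn.
Arguments Var {V Fn} _.
Arguments App {V Fn} _ _.

(* Type of a term; ctype gives the base type of each constant.
   Only ground terms have a type (variables have none). *)
Fixpoint typeof {V Fn : Type} (ctype : Fn -> basety) (t : term V Fn)
  : option (ty Fn) :=
  match t with
  | Var _ => None
  | App f ts =>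
      match ts with
      | [] => Some (Base (ctype f))
      | _ =>
        option_map (Comp f)
          ((fix go (l : list (term V Fn)) : option (list (ty Fn)) :=
              match l with
              | [] => Some []
              | u :: l' =>
                  match typeof ctype u, go l' with
                  | Some a, Some b => Some (a :: b)
                  | _, _ => None
                  end
              end) ts)
      end
  end.

Fixpoint subst {V Fn : Type} (theta : V -> term V Fn) (t : term V Fn)
  : term V Fn :=
  match t with
  | Var x => theta x
  | App f ts => App f (map (subst theta) ts)
  end.

Definition subst1 {V Fn : Type} (X : V) (s : term V Fn) : V -> term V Fn :=
  fun y => if excluded_middle_informative (y = X) then s else Var y.

Fixpoint occurs {V Fn : Type} (X : V) (t : term V Fn) : Prop :=
  match t with
  | Var y => y = X
  | App _ ts =>
      (fix go (l : list (term V Fn)) : Prop :=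
         match l with
         | [] => False
         | u :: l' => occurs X u \/ go l'
         end) ts
  end.

Definition eqn (V Fn : Type) := (term V Fn * term V Fn)%type.

Definition occurs_eqs {V Fn : Type} (X : V) (R : list (eqn V Fn)) : Prop :=
  exists e, In e R /\ (occurs X (fst e) \/ occurs X (snd e)).

Definition subst_eqs {V Fn : Type} (th : V -> term V Fn) (R : list (eqn V Fn))
  : list (eqn V Fn) :=
  map (fun e => (subst th (fst e), subst th (snd e))) R.

Definition is_var {V Fn : Type} (t : term V Fn) : Prop :=
  exists x, t = Var x.

(* The set {e} U Rest is represented by a list
   that is a permutation of e :: Rest (any equation may be selected). *)
Inductive state (V Fn : Type) : Type :=
| Run : list (eqn V Fn) -> bool -> state V Fn
| Wrong : state V Fn.
Arguments Run {V Fn} _ _.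
Arguments Wrong {V Fn}.

Inductive step {V Fn : Type} (ctype : Fn -> basety)
  : state V Fn -> state V Fn -> Prop :=
| rule1 : forall S f ts ss Rest F,
    Permutation S ((App f ts, App f ss) :: Rest) ->
    ts <> [] -> ss <> [] -> length ts = length ss ->
    step ctype (Run S F) (Run (combine ts ss ++ Rest) F)
| rule2 : forall S f g ts ss Rest F,
    Permutation S ((App f ts, App g ss) :: Rest) ->
    ts <> [] -> ss <> [] -> (f <> g \/ length ts <> length ss) ->
    step ctype (Run S F) Wrong
| rule3 : forall S c Rest F,
    Permutation S ((App c [], App c []) :: Rest) ->
    step ctype (Run S F) (Run Rest F)
| rule4 : forall S c d Rest F,
    Permutation S ((App c [], App d []) :: Rest) ->
    c <> d -> ctype c = ctype d ->
    step ctype (Run S F) (Run Rest false)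
| rule5 : forall S c d Rest F,
    Permutation S ((App c [], App d []) :: Rest) ->
    c <> d -> ctype c <> ctype d ->
    step ctype (Run S F) Wrong
| rule6 : forall S c f ts Rest F,
    Permutation S ((App c [], App f ts) :: Rest) -> ts <> [] ->
    step ctype (Run S F) Wrong
| rule7 : forall S c f ts Rest F,
    Permutation S ((App f ts, App c []) :: Rest) -> ts <> [] ->
    step ctype (Run S F) Wrong
| rule8 : forall S X Rest F,
    Permutation S ((Var X, Var X) :: Rest) ->
    step ctype (Run S F) (Run Rest F)
| rule9 : forall S t X Rest F,
    Permutation S ((t, Var X) :: Rest) -> ~ is_var t ->
    step ctype (Run S F) (Run ((Var X, t) :: Rest) F)
| rule10 : forall S X t Rest F,
    Permutation S ((Var X, t) :: Rest) ->
    ~ occurs X t -> occurs_eqs X Rest ->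
    step ctype (Run S F) (Run ((Var X, t) :: subst_eqs (subst1 X t) Rest) F)
| rule11 : forall S X t Rest F,
    Permutation S ((Var X, t) :: Rest) ->
    occurs X t -> t <> Var X ->
    step ctype (Run S F) (Run Rest false).

Inductive steps {V Fn : Type} (ctype : Fn -> basety)
  : state V Fn -> state V Fn -> Prop :=
| steps_refl : forall s, steps ctype s s
| steps_step : forall s1 s2 s3,
    step ctype s1 s2 -> steps ctype s2 s3 -> steps ctype s1 s3.

(* The algorithm, started on (t1 = t2, true), outputs wrong
   (along some run: the rule selection is nondeterministic). *)
Definition outputs_wrong {V Fn : Type} (ctype : Fn -> basety)
  (t1 t2 : term V Fn) : Prop :=
  steps ctype (Run [(t1, t2)] true) Wrong.

(* A wrong transition is only taken on an equation whose two sides can never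
   receive the same type: compound terms with different head symbols or
   arities, constants of different base types, or a constant against a
   compound term.  Conversely, if theta makes both sides of every equation
   have the same type, then theta keeps doing so after every non-failing
   rule: decomposition splits equal compound types componentwise, and the
   variable elimination [X |-> t] does not change the type of any
   theta-instance because theta X and theta t already have the same type.
   Hence a theta typing t1 = t2 would forbid ever reaching wrong. *)

From Stdlib Require Import List Permutation ClassicalEpsilon.
Import ListNotations.

Lemma map_neq_nil {A B : Type} (f : A -> B) l : l <> [] -> map f l <> [].
Proof. now destruct l. Qed.

Section TermInduction.
Context {V Fn : Type}.

Fixpoint term_nested_ind (P : term V Fn -> Prop)
  (HVar : forall x, P (Var x))
  (HApp : forall f ts, Forall P ts -> P (App f ts)) (t : term V Fn) : P t :=
  match t with
  | Var x => HVar x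
  | App f ts =>
      HApp f ts
        ((fix all_ts l : Forall P l :=
            match l with
            | [] => Forall_nil _
            | u :: l' => Forall_cons _ (term_nested_ind P HVar HApp u) (all_ts l')
            end) ts)
  end.

Lemma subst_subst (th s : V -> term V Fn) (u : term V Fn) :
  subst th (subst s u) = subst (fun y => subst th (s y)) u.
Proof.
  induction u as [x | f ts IH] using term_nested_ind; simpl; [reflexivity |].
  rewrite map_map; f_equal; now apply map_ext_Forall.
Qed.

End TermInduction.

Section Typing.
Context {V Fn : Type} (ctype : Fn -> basety).

Fixpoint typeof_list (l : list (term V Fn)) : option (list (ty Fn)) :=
  match l with
  | [] => Some []
  | u :: l' =>
      match typeof ctype u, typeof_list l' with
      | Some a, Some b => Some (a :: b)
      | _, _ => None
      end
  end.

Lemma typeof_App f ts :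
  typeof ctype (App f ts) =
  match ts with
  | [] => Some (Base (ctype f))
  | _ => option_map (Comp f) (typeof_list ts)
  end.
Proof. now destruct ts. Qed.

Lemma typeof_App_nonnil f ts tau :
  ts <> [] -> typeof ctype (App f ts) = Some tau ->
  exists L, typeof_list ts = Some L /\ tau = Comp f L.
Proof.
  intros Hts Htau; rewrite typeof_App in Htau.
  destruct ts as [| u ts]; [congruence |].
  destruct (typeof_list (u :: ts)) as [L |]; simpl in Htau; [| discriminate].
  injection Htau as <-; eauto.
Qed.

Lemma length_typeof_list l L : typeof_list l = Some L -> length L = length l.
Proof.
  revert L; induction l as [| u l IH]; simpl; intros L HL.
  - now injection HL as <-.
  - destruct (typeof ctype u), (typeof_list l); try discriminate.
    injection HL as <-; simpl; f_equal; auto.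
Qed.

Lemma typeof_list_map_ext (f g : term V Fn -> term V Fn) ts :
  Forall (fun u => typeof ctype (f u) = typeof ctype (g u)) ts ->
  typeof_list (map f ts) = typeof_list (map g ts).
Proof. induction 1 as [| u ts Hu _ IH]; simpl; now rewrite ?Hu, ?IH. Qed.

Lemma typeof_subst_ext (s1 s2 : V -> term V Fn) :
  (forall x, typeof ctype (s1 x) = typeof ctype (s2 x)) ->
  forall u, typeof ctype (subst s1 u) = typeof ctype (subst s2 u).
Proof.
  intros Hs u; induction u as [x | f ts IH] using term_nested_ind; simpl subst.
  - apply Hs.
  - rewrite !typeof_App.
    destruct ts as [| u ts]; [reflexivity |].
    now rewrite (typeof_list_map_ext (subst s1) (subst s2)).
Qed.

Lemma typeof_subst_subst1 (th : V -> term V Fn) X t u :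
  typeof ctype (th X) = typeof ctype (subst th t) ->
  typeof ctype (subst th (subst (subst1 X t) u)) = typeof ctype (subst th u).
Proof.
  intros HX; rewrite subst_subst; apply typeof_subst_ext; intros y.
  unfold subst1; destruct (excluded_middle_informative (y = X)) as [-> |]; auto.
Qed.

Definition same_type (u v : term V Fn) : Prop :=
  exists tau, typeof ctype u = Some tau /\ typeof ctype v = Some tau.

Lemma same_type_App f g ts ss :
  ts <> [] -> ss <> [] -> same_type (App f ts) (App g ss) ->
  f = g /\ exists L, typeof_list ts = Some L /\ typeof_list ss = Some L.
Proof.
  intros Hts Hss [tau [Ht Hs]].
  destruct (typeof_App_nonnil _ _ _ Hts Ht) as [L [HL ->]].
  destruct (typeof_App_nonnil _ _ _ Hss Hs) as [L' [HL' HLL']].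
  injection HLL' as -> ->; eauto.
Qed.

Lemma same_type_const_App c f ts : ts <> [] -> ~ same_type (App c []) (App f ts).
Proof.
  intros Hts [tau [Hc Hf]]; simpl in Hc; injection Hc as <-.
  now destruct (typeof_App_nonnil _ _ _ Hts Hf) as [L [_ ?]].
Qed.

Lemma same_type_combine (h : term V Fn -> term V Fn) ts ss L :
  typeof_list (map h ts) = Some L -> typeof_list (map h ss) = Some L ->
  forall e, In e (combine ts ss) -> same_type (h (fst e)) (h (snd e)).
Proof.
  revert ss L; induction ts as [| t ts IH]; intros [| s ss] L Hts Hss e He;
    simpl in *; try contradiction.
  destruct (typeof ctype (h t)) eqn:Ht, (typeof_list (map h ts)) eqn:Hts';
    try discriminate.
  destruct (typeof ctype (h s)) eqn:Hs, (typeof_list (map h ss)) eqn:Hss';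
    try discriminate.
  injection Hts as <-; injection Hss as -> ->.
  destruct He as [<- | He]; [exists t0; auto | eauto].
Qed.

Definition types_eqs (th : V -> term V Fn) (eqs : list (eqn V Fn)) : Prop :=
  forall e, In e eqs -> same_type (subst th (fst e)) (subst th (snd e)).

Lemma types_eqs_perm_cons th eqs e Rest :
  Permutation eqs (e :: Rest) -> types_eqs th eqs ->
  same_type (subst th (fst e)) (subst th (snd e)) /\ types_eqs th Rest.
Proof.
  intros HS Hth; split; [| intros e' He']; apply Hth;
    apply (Permutation_in _ (Permutation_sym HS)); simpl; auto.
Qed.

Definition typable_state (s : state V Fn) : Prop :=
  match s with
  | Run eqs _ => exists th, types_eqs th eqs
  | Wrong => False
  end.

Lemma step_typable s s' :
  step ctype s s' -> typable_state s -> typable_state s'.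
Proof.
  destruct 1 as [S0 f ts ss Rest F HS Hts Hss _ | S0 f g ts ss Rest F HS Hts Hss Hfg
                | S0 c Rest F HS | S0 c d Rest F HS _ _ | S0 c d Rest F HS _ Hcd
                | S0 c f ts Rest F HS Hts | S0 c f ts Rest F HS Hts | S0 X Rest F HS
                | S0 t X Rest F HS _ | S0 X t Rest F HS _ _ | S0 X t Rest F HS _ _];
    simpl; intros [th Hth];
    destruct (types_eqs_perm_cons _ _ _ _ HS Hth) as [Hhead HRest]; simpl in Hhead.
  - destruct (same_type_App _ _ _ _ (map_neq_nil _ _ Hts) (map_neq_nil _ _ Hss) Hhead)
      as [_ [L [HL HL']]].
    exists th; intros e He; apply in_app_or in He as [He | He]; auto.
    exact (same_type_combine _ _ _ _ HL HL' e He).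
  - destruct (same_type_App _ _ _ _ (map_neq_nil _ _ Hts) (map_neq_nil _ _ Hss) Hhead)
      as [-> [L [HL HL']]].
    apply length_typeof_list in HL, HL'; rewrite !length_map in *.
    destruct Hfg; congruence.
  - eauto.
  - eauto.
  - destruct Hhead as [tau [Hc Hd]]; simpl in Hc, Hd; congruence.
  - exact (same_type_const_App _ _ _ (map_neq_nil _ _ Hts) Hhead).
  - destruct Hhead as [tau [Hf Hc]].
    apply (same_type_const_App c f _ (map_neq_nil (subst th) _ Hts)); now exists tau.
  - eauto.
  - exists th; intros e [<- | He]; auto.
    destruct Hhead as [tau [Ht HX]]; now exists tau.
  - exists th; intros e [<- | He]; auto.
    unfold subst_eqs in He; apply in_map_iff in He as [[a b] [<- Hab]].
    destruct Hhead as [tau [HX Ht]].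
    assert (HXt : typeof ctype (th X) = typeof ctype (subst th t)) by congruence.
    destruct (HRest _ Hab) as [tau' [Ha Hb]]; exists tau'; simpl in *.
    now rewrite !typeof_subst_subst1.
  - eauto.
Qed.

Lemma steps_typable s s' :
  steps ctype s s' -> typable_state s -> typable_state s'.
Proof. induction 1; eauto using step_typable. Qed.

End Typing.

Theorem theorem2 (V Fn : Type) (ctype : Fn -> basety) (t1 t2 : term V Fn) :
  outputs_wrong ctype t1 t2 ->
  ~ exists (theta : V -> term V Fn) (tau : ty Fn),
      typeof ctype (subst theta t1) = Some tau /\
      typeof ctype (subst theta t2) = Some tau.
Proof.
  intros Hwrong [theta [tau Htau]].
  apply (steps_typable ctype _ _ Hwrong).
  exists theta; intros e [<- | []]; now exists tau.
Qed.
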